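(* For every $\epsilon>0$ there exists $n_0\in\mathbb N$ such that the following holds for all $n>n_0$. Let $0<\alpha<1$ and suppose $\sigma\in S_n$ has no fixed points and has at most $n^{\alpha}$ cycles of length at most $\lceil 2/\epsilon\rceil$. Then $E(\sigma)\le\alpha/2+\epsilon/2$.
   Context: For $\sigma\in S_n$ let $f_\sigma(i)$ be the number of $i$-cycles of $\sigma$ (fixed points are $1$-cycles). Define $e_1,\dots,e_n$ by $e_1+\cdots+e_k=\max\left(\frac{\log\left(\sum_{i=1}^k i f_\sigma(i)\right)}{\log n},0\right)$ for $1\le k\le n$ (with $\log 0=-\infty$), and set $E(\sigma)=\sum_{i=1}^n e_i/i$. *)

From Stdlib Require Import Reals ZArith List.
From mathcomp Require Import all_boot all_fingroup.

Set Implicit Arguments.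
Unset Strict Implicit.
Unset Printing Implicit Defensive.

Definition cyc_count (n : nat) (s : 'S_n) (i : nat) : nat :=
  #|[set C in porbits s | #|C| == i]|.

Definition Spart (n : nat) (s : 'S_n) (k : nat) : nat :=
  \sum_(1 <= i < k.+1) i * cyc_count s i.

Definition ncycles_le (n : nat) (s : 'S_n) (c : nat) : nat :=
  #|[set C in porbits s | #|C| <= c]|.

Local Open Scope R_scope.

(* e_1 + ... + e_k = max(log(Spart k)/log n, 0), with log 0 = -infinity
   (so the max is 0 when Spart k = 0). *)
Definition Ppart (n : nat) (s : 'S_n) (k : nat) : R :=
  if Spart s k == 0%N then 0
  else Rmax (ln (INR (Spart s k)) / ln (INR n)) 0.

Definition e_coef (n : nat) (s : 'S_n) (k : nat) : R :=
  Ppart s k - Ppart s (k.-1).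

Definition Eperm (n : nat) (s : 'S_n) : R :=
  fold_right Rplus 0 (List.map (fun i => e_coef s i / INR i) (iota 1 n)).

Definition Rceil (x : R) : Z := (- Int_part (- x))%Z.

(* Write P k := e_1 + ... + e_k = max (log S_k / log n, 0), where S_k counts the points lying
   in cycles of length <= k.  Summation by parts gives E = P n / n + sum_{k<n} P k / (k (k+1)).
   Without fixed points P 1 = 0; always S_k <= n, so P k <= 1; and for k <= c := ceil(2/eps)
   we have S_k <= c n^alpha, so P k <= alpha + log c / log n.  Splitting the sum at c gives
   E <= (alpha + log c / log n) / 2 + 1/(c+1), where 1/(c+1) < eps/2 and log c / log n -> 0. *)
From Stdlib Require Import Reals ZArith Lra Lia.
From mathcomp Require Import all_boot all_fingroup zify.

Lemma card_set_pred_sum (T : finType) (A : {set T}) (p : pred T) :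
  #|[set x in A | p x]| = \sum_(x in A) p x.
Proof.
rewrite -sum1_card big_mkcond /= [RHS]big_mkcond /=.
by apply: eq_bigr => x _; rewrite inE; case: (x \in A); case: (p x).
Qed.

Lemma sum_nat_mul_eq (k x : nat) :
  \sum_(1 <= i < k.+1) i * (x == i) = x * (x <= k).
Proof.
elim: k => [|k IH]; first by rewrite big_geq //; case: x => [|x]; rewrite ?muln0.
rewrite big_nat_recr //= IH.
case: (ltngtP x k.+1) => [le_xk|lt_kx|->]; rewrite ?ltnn ?muln0 ?addn0 ?add0n //.
- by rewrite -ltnS le_xk muln1.
- by rewrite leqNgt ltnW ?muln0.
Qed.

Section CycleCounts.
Variables (n : nat) (s : 'S_n).

Lemma Spart_porbits k : Spart s k = \sum_(C in porbits s) #|C| * (#|C| <= k).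
Proof.
rewrite /Spart.
under eq_bigr => i _ do rewrite /cyc_count card_set_pred_sum big_distrr /=.
by rewrite exchange_big /=; apply: eq_bigr => C _; apply: sum_nat_mul_eq.
Qed.

Lemma sum_card_porbits : \sum_(C in porbits s) #|C| = n.
Proof.
rewrite -[RHS]card_ord -sum1_card (partition_big_imset (porbit s)) /=.
apply: eq_bigr => C /imsetP [y _ ->].
by rewrite -sum1_card; apply: eq_bigl => x; rewrite eq_porbit_mem.
Qed.

Lemma Spart0 : Spart s 0 = 0.
Proof. by rewrite /Spart big_geq. Qed.

Lemma Spart_le_n k : Spart s k <= n.
Proof.
rewrite Spart_porbits -[leqRHS]sum_card_porbits; apply: leq_sum => C _.
by case: (#|C| <= k); rewrite ?muln1 ?muln0.
Qed.

Lemma Spart_le_ncycles k c : k <= c -> Spart s k <= c * ncycles_le s c.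
Proof.
move=> le_kc; rewrite Spart_porbits /ncycles_le card_set_pred_sum big_distrr /=.
apply: leq_sum => C _; case: (leqP #|C| k) => [le_Ck|_]; last by rewrite muln0.
by rewrite (leq_trans le_Ck le_kc) !muln1 (leq_trans le_Ck le_kc).
Qed.

Lemma Spart1_fixfree : (forall x, s x <> x) -> Spart s 1 = 0.
Proof.
move=> fixfree; rewrite Spart_porbits big1 // => C /imsetP [y _ ->].
case: leqP => [le_C1|]; last by rewrite muln0.
have /cards1P [z orbit_y] : #|porbit s y| == 1.
  by rewrite eqn_leq le_C1 lt0n card_porbit_neq0.
have := porbit_id s y; have := mem_porbit s 1 y.
by rewrite orbit_y !inE expg1 => /eqP sy_z /eqP y_z; case: (fixfree y); rewrite sy_z y_z.
Qed.

End CycleCounts.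

Local Open Scope R_scope.

Fixpoint psum (f : nat -> R) (m : nat) : R :=
  if m is m'.+1 then psum f m' + f m else 0.

Lemma psumS (f : nat -> R) (m : nat) : psum f m.+1 = psum f m + f m.+1.
Proof. by []. Qed.

Lemma fold_map_iotaS (f : nat -> R) (a m : nat) :
  List.fold_right Rplus 0 (List.map f (iota a m.+1)) =
  List.fold_right Rplus 0 (List.map f (iota a m)) + f (a + m)%N.
Proof.
elim: m a => [|m IH] a /=; first by rewrite addn0; ring.
by have := IH a.+1; rewrite /= addSnnS; lra.
Qed.

Lemma psum_iota (f : nat -> R) (m : nat) :
  List.fold_right Rplus 0 (List.map f (iota 1 m)) = psum f m.
Proof. by elim: m => [|m IH] //; rewrite fold_map_iotaS IH. Qed.

Lemma psum_abel (P : nat -> R) (m : nat) : P 0%N = 0 ->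
  psum (fun i => (P i - P i.-1) / INR i) m.+1 =
  P m.+1 / INR m.+1 + psum (fun i => P i / (INR i * INR i.+1)) m.
Proof.
move=> P0; elim: m => [|m IH]; first by rewrite /= P0; field.
rewrite psumS IH psumS [m.+2.-1]/= (S_INR m.+1).
have m_pos : 0 < INR m.+1 by apply: lt_0_INR; lia.
field; lra.
Qed.

Lemma psum_weighted_le (P : nat -> R) (K : R) (a d : nat) :
  (forall i, (a < i <= a + d)%N -> P i <= K) ->
  psum (fun i => P i / (INR i * INR i.+1)) (a + d) <=
  psum (fun i => P i / (INR i * INR i.+1)) a + K * (/ INR a.+1 - / INR (a + d).+1).
Proof.
elim: d => [|d IH] P_le.
  by rewrite addn0 Rminus_diag Rmult_0_r Rplus_0_r; apply: Rle_refl.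
have i_pos : 0 < INR (a + d).+1 by apply: lt_0_INR; lia.
have step : P (a + d).+1 / (INR (a + d).+1 * INR (a + d).+2)
            <= K * (/ INR (a + d).+1 - / INR (a + d).+2).
  have -> : / INR (a + d).+1 - / INR (a + d).+2 = / (INR (a + d).+1 * INR (a + d).+2).
    by rewrite (S_INR (a + d).+1); field; lra.
  apply: Rmult_le_compat_r; last by apply: P_le; lia.
  by apply/Rlt_le/Rinv_0_lt_compat/Rmult_lt_0_compat => //; apply: lt_0_INR; lia.
have /IH IHd : forall i, (a < i <= a + d)%N -> P i <= K.
  by move=> i i_range; apply: P_le; lia.
rewrite addnS psumS; lra.
Qed.

Lemma abel_bound (P : nat -> R) (beta : R) (c n : nat) :
  (0 < c < n)%N -> P 0%N = 0 -> P 1%N = 0 ->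
  (forall m, (0 < m <= c)%N -> P m <= beta) ->
  (forall m, (c < m <= n)%N -> P m <= 1) ->
  psum (fun i => (P i - P i.-1) / INR i) n <= beta / 2 + / INR c.+1.
Proof.
move=> /andP [c_pos lt_cn] P0 P1 P_le_beta P_le_1.
have beta_ge0 : 0 <= beta by rewrite -P1; apply: P_le_beta.
case: n lt_cn P_le_1 => [//|n] lt_cn P_le_1.
rewrite psum_abel //; set w := psum (fun i => P i / (INR i * INR i.+1)).
have w1 : w 1%N = 0 by rewrite /w /= P1 Rdiv_0_l Rplus_0_l.
have head : w c <= w 1%N + beta * (/ INR 2 - / INR c.+1).
  have := psum_weighted_le P beta 1 (c - 1); rewrite subnKC //; apply=> i i_range.
  by apply: P_le_beta; lia.
have tail : w n <= w c + 1 * (/ INR c.+1 - / INR n.+1).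
  have := psum_weighted_le P 1 c (n - c); rewrite subnKC; last by lia.
  by apply=> i i_range; apply: P_le_1; lia.
have last_term : P n.+1 / INR n.+1 <= / INR n.+1.
  rewrite /Rdiv -[X in _ <= X]Rmult_1_l; apply: Rmult_le_compat_r.
  - by apply/Rlt_le/Rinv_0_lt_compat/lt_0_INR; lia.
  - by apply: P_le_1; lia.
have tail_weight : 0 <= beta * / INR c.+1.
  by apply/Rmult_le_pos/Rlt_le/Rinv_0_lt_compat/lt_0_INR => //; lia.
have two : INR 2 = 2 by rewrite /=; lra.
rewrite two in head; lra.
Qed.

Lemma ln_le (x y : R) : 0 < x -> x <= y -> ln x <= ln y.
Proof. by move=> x_pos [lt_xy|->]; [apply/Rlt_le/ln_increasing | apply: Rle_refl]. Qed.

Section PpartBounds.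
Variables (n : nat) (s : 'S_n).

Lemma Ppart0 : Ppart s 0 = 0.
Proof. by rewrite /Ppart Spart0. Qed.

Lemma Ppart1_fixfree : (forall x, s x <> x) -> Ppart s 1 = 0.
Proof. by move=> fixfree; rewrite /Ppart Spart1_fixfree. Qed.

Hypothesis ln_n_pos : 0 < ln (INR n).

Lemma Ppart_le_ln k (y : R) :
  INR (Spart s k) <= y -> 0 <= ln y -> Ppart s k <= ln y / ln (INR n).
Proof.
move=> Spart_le_y ln_y_ge0; have inv_pos := Rinv_0_lt_compat _ ln_n_pos.
have ratio_ge0 : 0 <= ln y / ln (INR n) by apply: Rmult_le_pos; lra.
rewrite /Ppart; case: eqP => [//|Spart_neq0].
apply: Rmax_lub => //; apply: Rmult_le_compat_r; first lra.
by apply: ln_le => //; apply: lt_0_INR; lia.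
Qed.

Lemma Ppart_le1 k : Ppart s k <= 1.
Proof.
rewrite -(Rdiv_diag (ln (INR n))); last lra.
by apply: Ppart_le_ln; [apply/le_INR/leP/Spart_le_n | lra].
Qed.

Lemma Ppart_le_short k c alpha : (0 < c)%N -> (k <= c)%N -> 0 <= alpha ->
  INR (ncycles_le s c) <= Rpower (INR n) alpha ->
  Ppart s k <= alpha + ln (INR c) / ln (INR n).
Proof.
move=> c_pos le_kc alpha_ge0 few_short.
have c_ge1 : 1 <= INR c by apply: (le_INR 1); lia.
have pow_pos : 0 < Rpower (INR n) alpha by apply: exp_pos.
have ln_bound : ln (INR c * Rpower (INR n) alpha) = ln (INR c) + alpha * ln (INR n).
  by rewrite ln_mult ?ln_Rpower //; lra.
have -> : alpha + ln (INR c) / ln (INR n) = ln (INR c * Rpower (INR n) alpha) / ln (INR n).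
  by rewrite ln_bound; field; lra.
apply: Ppart_le_ln; last first.
  rewrite ln_bound; have := ln_le _ _ Rlt_0_1 c_ge1; rewrite ln_1.
  by have := Rmult_le_pos _ _ alpha_ge0 (Rlt_le _ _ ln_n_pos); lra.
apply: Rle_trans (_ : INR c * INR (ncycles_le s c) <= _).
  by rewrite -mult_INR; apply/le_INR/leP/Spart_le_ncycles.
by apply: Rmult_le_compat_l => //; lra.
Qed.

End PpartBounds.

Lemma Eperm_psum (n : nat) (s : 'S_n) :
  Eperm s = psum (fun i => (Ppart s i - Ppart s i.-1) / INR i) n.
Proof. exact: psum_iota. Qed.

Lemma Rceil_ge (x : R) : 0 <= x -> x <= INR (Z.to_nat (Rceil x)).
Proof.
move=> x_ge0; have [up_gt up_le] := archimed (- x).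
have le_ceil : x <= IZR (Rceil x).
  by rewrite /Rceil /Int_part opp_IZR minus_IZR /=; lra.
have ceil_ge0 : (0 <= Rceil x)%Z by apply: le_IZR; lra.
by rewrite INR_IZR_INZ Z2Nat.id.
Qed.

Lemma Rceil_pos (x : R) : 0 < x -> (0 < Z.to_nat (Rceil x))%N.
Proof.
move=> x_pos; apply/ltP/INR_lt.
by have := Rceil_ge x (Rlt_le _ _ x_pos); rewrite /=; lra.
Qed.

Lemma inv_Rceil_succ_lt (x : R) : 0 < x -> / INR (Z.to_nat (Rceil x)).+1 < / x.
Proof.
move=> x_pos; have := Rceil_ge x (Rlt_le _ _ x_pos).
by rewrite S_INR => ceil_ge; apply: Rinv_lt_contravar; [apply: Rmult_lt_0_compat|]; lra.
Qed.

Lemma ln_nat_eventually_ge (L : R) :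
  exists n0 : nat, forall n : nat, (n0 < n)%N -> L <= ln (INR n).
Proof.
exists (Z.to_nat (up (exp L))) => n lt_n0n.
have [up_gt _] := archimed (exp L); have expL_pos := exp_pos L.
have up_ge0 : (0 <= up (exp L))%Z by apply/le_IZR; lra.
have lt_expL_n : exp L < INR n.
  apply: Rlt_trans up_gt _.
  by rewrite -(Z2Nat.id (up (exp L))) // -INR_IZR_INZ; apply/lt_INR/ltP.
by rewrite -[X in X <= _](ln_exp L); apply/Rlt_le/ln_increasing.
Qed.

Lemma ln_ratio_eventually_le (x mu : R) : 0 < mu ->
  exists n0 : nat, forall n : nat, (n0 < n)%N ->
    0 < ln (INR n) /\ ln x / ln (INR n) <= mu.
Proof.
move=> mu_pos; have [n0 large_n] := ln_nat_eventually_ge (Rmax 1 (ln x / mu)).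
exists n0 => n /large_n ln_n_ge.
have := Rmax_l 1 (ln x / mu); have := Rmax_r 1 (ln x / mu) => ratio_le one_le.
have ln_n_pos : 0 < ln (INR n) by lra.
split=> //; apply: (Rmult_le_reg_r (ln (INR n))) => //.
have -> : ln x / ln (INR n) * ln (INR n) = ln x / mu * mu by field; lra.
by rewrite Rmult_comm; apply: Rmult_le_compat_l; lra.
Qed.

Theorem lemma2p7 :
  forall eps : R, 0 < eps ->
  exists n0 : nat, forall n : nat, (n0 < n)%N ->
  forall alpha : R, 0 < alpha < 1 ->
  forall s : 'S_n,
    (forall x, s x <> x) ->
    INR (ncycles_le s (Z.to_nat (Rceil (2 / eps)))) <= Rpower (INR n) alpha ->
    Eperm s <= alpha / 2 + eps / 2.
Proof.
move=> eps eps_pos; set c := Z.to_nat (Rceil (2 / eps)).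
have two_eps_pos : 0 < 2 / eps by apply: Rdiv_lt_0_compat; lra.
have c_pos : (0 < c)%N by apply: Rceil_pos.
have slack : / INR c.+1 < eps / 2 by rewrite -Rinv_div; apply: inv_Rceil_succ_lt.
set mu := eps - 2 * / INR c.+1.
have [|n1 large_n] := ln_ratio_eventually_le (INR c) mu; first by rewrite /mu; lra.
exists (maxn c n1) => n; rewrite gtn_max => /andP [lt_cn /large_n [ln_n_pos ratio_small]].
move=> alpha [alpha_pos _] s fixfree few_short.
rewrite Eperm_psum.
apply: Rle_trans
  (abel_bound (Ppart s) (alpha + ln (INR c) / ln (INR n)) c n _ _ _ _ _) _.
- exact/andP.
- exact: Ppart0.
- exact: Ppart1_fixfree.
- by move=> m /andP [_ le_mc]; apply: Ppart_le_short => //; lra.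
- by move=> m _; apply: Ppart_le1.
- by rewrite /mu in ratio_small; lra.
Qed.
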